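(* Let $\alpha>0$. Let $u$ be a quasi-subharmonic function on a neighborhood of the closed disc $\overline{\mathbb{D}(-1,3)}\subset\mathbb{C}$ such that $\Delta u\ge-1$ and $u\le1$ on $\overline{\mathbb{D}(-1,3)}$, and $u(z)\le|z|^\alpha$ for all $z\in\overline{\mathbb{D}(1,1)}$. Then there is a constant $c>0$ depending only on $\alpha$ such that for all real $t\in[-1/2,0)$: $u(t)\le c|t|^{\min(1,\alpha)}$ if $\alpha\ne1$, and $u(t)\le -c|t|\log|t|$ if $\alpha=1$ (and $u(0)\le0$).
   Context: $\mathbb{D}(w,r)$ denotes the open disc of center $w$ and radius $r$ in $\mathbb{C}$; $\Delta$ is the Laplacian on $\mathbb{C}$, and $\Delta u\ge-1$ is understood in the sense of distributions. *)

From Stdlib Require Import Reals Lra.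
Open Scope R_scope.

(* Values in [-oo, +oo) : subharmonic functions may take the value -oo. *)
Inductive ER : Type := Fin : R -> ER | NInf : ER.

Definition ER_le (e : ER) (a : R) : Prop :=
  match e with Fin x => x <= a | NInf => True end.
Definition ER_lt (e : ER) (a : R) : Prop :=
  match e with Fin x => x < a | NInf => True end.
Definition ER_addR (e : ER) (a : R) : ER :=
  match e with Fin x => Fin (x + a) | NInf => NInf end.

Definition dist2 (x y x' y' : R) : R := (x - x') ^ 2 + (y - y') ^ 2.

Definition cdisc (cx cy r x y : R) : Prop := dist2 x y cx cy <= r ^ 2.
Definition odisc (cx cy r x y : R) : Prop := dist2 x y cx cy < r ^ 2.

Definition open_set (U : R -> R -> Prop) : Prop :=
  forall x y, U x y -> exists d, 0 < d /\ forall x' y', dist2 x' y' x y < d ^ 2 -> U x' y'.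

Definition usc_on (U : R -> R -> Prop) (v : R -> R -> ER) : Prop :=
  forall x y, U x y -> forall a, ER_lt (v x y) a ->
    exists d, 0 < d /\ forall x' y', U x' y' -> dist2 x' y' x y < d ^ 2 -> ER_lt (v x' y') a.

Definition cont_on (S : R -> R -> Prop) (h : R -> R -> R) : Prop :=
  forall x y, S x y -> forall eps, 0 < eps ->
    exists d, 0 < d /\ forall x' y', S x' y' -> dist2 x' y' x y < d ^ 2 ->
      Rabs (h x' y' - h x y) < eps.

Definition harmonic_on (S : R -> R -> Prop) (h : R -> R -> R) : Prop :=
  exists hx hy hxx hyy : R -> R -> R,
    forall x y, S x y ->
      derivable_pt_lim (fun s => h s y) x (hx x y) /\
      derivable_pt_lim (fun s => h x s) y (hy x y) /\
      derivable_pt_lim (fun s => hx s y) x (hxx x y) /\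
      derivable_pt_lim (fun s => hy x s) y (hyy x y) /\
      hxx x y + hyy x y = 0.

Definition subharmonic_on (U : R -> R -> Prop) (v : R -> R -> ER) : Prop :=
  open_set U /\ usc_on U v /\
  forall cx cy r, 0 < r -> (forall x y, cdisc cx cy r x y -> U x y) ->
    forall h : R -> R -> R,
      cont_on (cdisc cx cy r) h -> harmonic_on (odisc cx cy r) h ->
      (forall x y, dist2 x y cx cy = r ^ 2 -> ER_le (v x y) (h x y)) ->
      forall x y, cdisc cx cy r x y -> ER_le (v x y) (h x y).

(* u quasi-subharmonic on U with Delta u >= -1 (distributions)
   <=> u + |z|^2/4 is subharmonic on U  (Delta(|z|^2/4) = 1). *)
Definition qsh_lap_ge_m1 (U : R -> R -> Prop) (u : R -> R -> ER) : Prop :=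
  subharmonic_on U (fun x y => ER_addR (u x y) ((x ^ 2 + y ^ 2) / 4)).

Definition rpow (r a : R) : R := if Rle_dec r 0 then 0 else Rpower r a.

Definition modz (x y : R) : R := sqrt (x ^ 2 + y ^ 2).

(* In the coordinate [w = 2z/(z-2)] the origin stays fixed, the disc
   [D(1,1)] becomes the half-plane [Re w <= 0] and the point [t = -s] becomes
   [2s/(s+2)], comparable to [s].  With [k = s/4], compare [u] with [H (w + k)]
   on the cut disc [|w| <= 1/4, Re w >= -k/2], where [H] is harmonic on
   [Re w > 0] and dominates [128 |w|^beta]: a multiple of [Re w^alpha] if
   [alpha < 1], of [Re (- w log w)] if [alpha = 1], and
   [c1 Re w - c2 Re w^gamma] with [gamma = min alpha (3/2)] if [alpha > 1].
   Off the half-disc [|w| < 1/8, Re w > 0] the hypotheses [u <= |z|^alpha]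
   (where [Re w <= 0]) and [u <= 1] already give [u <= H]; since
   [u + |z|^2/4] is subharmonic, a maximum principle, made strict by the
   correction [-|z|^2], carries the bound inside.  At [w + k = s/4 + 2s/(s+2)]
   the barriers have size [s^alpha], [s log (1/s)] and [s]. *)

From Stdlib Require Import Reals Lra Psatz Classical.
From Coquelicot Require Import Coquelicot.
Open Scope R_scope.

Lemma ER_le_addR e c a : ER_le (ER_addR e c) a <-> ER_le e (a - c).
Proof. destruct e; simpl; split; intros; auto; lra. Qed.

Lemma cont_on_of_continuity_2d_pt (S : R -> R -> Prop) (h : R -> R -> R) :
  (forall x y, S x y -> continuity_2d_pt h x y) -> cont_on S h.
Proof.
  intros Hc x y Sxy eps Heps.
  destruct (Hc x y Sxy (mkposreal eps Heps)) as [[d Hd] Hball]; simpl in Hball.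
  exists d; split; [exact Hd|].
  intros x' y' _ Hdist; unfold dist2 in Hdist.
  pose proof (pow2_ge_0 (x' - x)); pose proof (pow2_ge_0 (y' - y)).
  apply Hball; apply Rabs_def1; nra.
Qed.

Lemma continuity_pt_of_derivable_pt_lim f x l :
  derivable_pt_lim f x l -> continuity_pt f x.
Proof. intros H; exact (derivable_continuous_pt f x (exist _ l H)). Qed.

Lemma continuity_2d_pt_comp_derivable (f : R -> R) l (h : R -> R -> R) x y :
  derivable_pt_lim f (h x y) l -> continuity_2d_pt h x y ->
  continuity_2d_pt (fun u v => f (h u v)) x y.
Proof.
  intros Hf Hh; apply continuity_1d_2d_pt_comp; auto.
  exact (continuity_pt_of_derivable_pt_lim f _ l Hf).
Qed.

Lemma continuity_2d_pt_pow (h : R -> R -> R) n x y :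
  continuity_2d_pt h x y -> continuity_2d_pt (fun u v => h u v ^ n) x y.
Proof.
  apply (continuity_2d_pt_comp_derivable (fun t => t ^ n) (INR n * h x y ^ pred n)).
  apply derivable_pt_lim_pow.
Qed.

Lemma continuity_2d_pt_div (f g : R -> R -> R) x y :
  g x y <> 0 -> continuity_2d_pt f x y -> continuity_2d_pt g x y ->
  continuity_2d_pt (fun u v => f u v / g u v) x y.
Proof.
  intros Hg Hf Hc; apply continuity_2d_pt_mult; auto.
  apply continuity_2d_pt_inv; auto.
Qed.

Lemma continuity_2d_pt_abs2 (a b : R -> R -> R) x y :
  continuity_2d_pt a x y -> continuity_2d_pt b x y ->
  continuity_2d_pt (fun u v => a u v ^ 2 + b u v ^ 2) x y.
Proof. intros; apply continuity_2d_pt_plus; apply continuity_2d_pt_pow; auto. Qed.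

Lemma continuity_2d_pt_arg (a b : R -> R -> R) x y :
  0 < a x y -> continuity_2d_pt a x y -> continuity_2d_pt b x y ->
  continuity_2d_pt (fun u v => atan (b u v / a u v)) x y.
Proof.
  intros Ha Ca Cb.
  apply (continuity_2d_pt_comp_derivable atan _ _ _ _ (derivable_pt_lim_atan _)).
  apply continuity_2d_pt_div; auto; lra.
Qed.

Lemma continuity_2d_pt_affine k0 k1 k2 x y :
  continuity_2d_pt (fun x y => k0 + k1 * x + k2 * y) x y.
Proof.
  apply (continuity_2d_pt_plus (fun x y => k0 + k1 * x) (fun x y => k2 * y));
    [apply (continuity_2d_pt_plus (fun x y => k0) (fun x y => k1 * x))|];
    repeat apply continuity_2d_pt_mult;
    auto using continuity_2d_pt_const, continuity_2d_pt_id1, continuity_2d_pt_id2.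
Qed.

Lemma harmonic_on_subset (W V : R -> R -> Prop) h :
  (forall x y, V x y -> W x y) -> harmonic_on W h -> harmonic_on V h.
Proof.
  intros HVW [hx [hy [hxx [hyy H]]]].
  exists hx, hy, hxx, hyy; intros x y Vxy; exact (H x y (HVW x y Vxy)).
Qed.

Lemma harmonic_on_scal (W : R -> R -> Prop) c h :
  harmonic_on W h -> harmonic_on W (fun x y => c * h x y).
Proof.
  intros [hx [hy [hxx [hyy H]]]].
  exists (fun x y => c * hx x y), (fun x y => c * hy x y),
         (fun x y => c * hxx x y), (fun x y => c * hyy x y).
  intros x y Wxy; destruct (H x y Wxy) as [Dx [Dy [Dxx [Dyy L]]]].
  repeat split.
  - apply (derivable_pt_lim_scal (fun s => h s y)); exact Dx.
  - apply (derivable_pt_lim_scal (fun s => h x s)); exact Dy.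
  - apply (derivable_pt_lim_scal (fun s => hx s y)); exact Dxx.
  - apply (derivable_pt_lim_scal (fun s => hy x s)); exact Dyy.
  - rewrite <- Rmult_plus_distr_l, L; ring.
Qed.

Lemma harmonic_on_lincomb (W : R -> R -> Prop) h1 h2 c1 c2 :
  harmonic_on W h1 -> harmonic_on W h2 ->
  harmonic_on W (fun x y => c1 * h1 x y + c2 * h2 x y).
Proof.
  intros [hx1 [hy1 [hxx1 [hyy1 H1]]]] [hx2 [hy2 [hxx2 [hyy2 H2]]]].
  exists (fun x y => c1 * hx1 x y + c2 * hx2 x y),
         (fun x y => c1 * hy1 x y + c2 * hy2 x y),
         (fun x y => c1 * hxx1 x y + c2 * hxx2 x y),
         (fun x y => c1 * hyy1 x y + c2 * hyy2 x y).
  intros x y Wxy.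
  destruct (H1 x y Wxy) as [Dx1 [Dy1 [Dxx1 [Dyy1 L1]]]].
  destruct (H2 x y Wxy) as [Dx2 [Dy2 [Dxx2 [Dyy2 L2]]]].
  repeat split.
  - apply derivable_pt_lim_plus; apply derivable_pt_lim_scal; assumption.
  - apply derivable_pt_lim_plus; apply derivable_pt_lim_scal; assumption.
  - apply (derivable_pt_lim_plus (fun s => c1 * hx1 s y) (fun s => c2 * hx2 s y));
      apply derivable_pt_lim_scal; assumption.
  - apply (derivable_pt_lim_plus (fun s => c1 * hy1 x s) (fun s => c2 * hy2 x s));
      apply derivable_pt_lim_scal; assumption.
  - nra.
Qed.

Lemma harmonic_on_affine (W : R -> R -> Prop) k0 k1 k2 :
  harmonic_on W (fun x y => k0 + k1 * x + k2 * y).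
Proof.
  exists (fun _ _ => k1), (fun _ _ => k2), (fun _ _ => 0), (fun _ _ => 0).
  intros x y _; repeat split; try ring;
    apply is_derive_Reals; auto_derive; auto; ring.
Qed.

(** * A strict maximum principle *)

Lemma is_lub_approx (E : R -> Prop) m d : is_lub E m -> 0 < d -> exists e, E e /\ m - d < e.
Proof.
  intros [_ Hlub] Hd; apply NNPP; intro N.
  assert (m <= m - d); [|lra].
  apply Hlub; intros e Ee; apply Rnot_lt_le; intro; apply N; exists e; auto.
Qed.

(* The paraboloid [-(x^2+y^2)] makes the comparison function strictly
   superharmonic: an r-disc around [p] costs [r^2] in the sub-mean property. *)
Lemma subharmonic_le_on_disc U v h px py r m :
  subharmonic_on U v -> 0 < r -> (forall x y, cdisc px py r x y -> U x y) ->
  (forall x y, cdisc px py r x y -> continuity_2d_pt h x y) ->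
  harmonic_on (odisc px py r) h ->
  (forall x y, dist2 x y px py = r ^ 2 -> ER_le (v x y) (h x y - (x^2 + y^2) + m)) ->
  ER_le (v px py) (h px py - (px^2 + py^2) + m - r^2).
Proof.
  intros [_ [_ Hsub]] Hr HU Hc Hh Hcircle.
  set (hp := fun x y => 1 * h x y + 1 * ((px^2 + py^2 - r^2 + m) + (-2*px) * x + (-2*py) * y)).
  assert (Hp : ER_le (v px py) (hp px py)).
  { apply (Hsub px py r Hr HU hp).
    - apply cont_on_of_continuity_2d_pt; intros x y Hxy.
      apply (continuity_2d_pt_plus (fun x y => 1 * h x y)), continuity_2d_pt_mult;
        auto using continuity_2d_pt_const, continuity_2d_pt_mult, continuity_2d_pt_affine.
    - apply harmonic_on_lincomb; [exact Hh | apply harmonic_on_affine].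
    - intros x y Hxy; specialize (Hcircle x y Hxy); unfold hp, dist2 in *.
      destruct (v x y); simpl in *; auto; nra.
    - unfold cdisc, dist2; nra. }
  unfold hp in Hp; destruct (v px py); simpl in *; auto; lra.
Qed.

Lemma subharmonic_le_of_collar U S I v h r M :
  subharmonic_on U v -> 0 < r -> (forall x y, S x y -> U x y) ->
  (forall px py, I px py -> forall x y, cdisc px py r x y -> S x y) ->
  harmonic_on S h -> (forall x y, S x y -> continuity_2d_pt h x y) ->
  (forall x y, S x y -> ~ I x y -> ER_le (v x y) (h x y - (x^2 + y^2))) ->
  (forall x y, S x y -> ER_le (v x y) (h x y - (x^2 + y^2) + M)) ->
  forall x y, S x y -> ER_le (v x y) (h x y - (x^2 + y^2)).
Proof.
  intros Hv Hr HSU HIS Hh Hc Hcollar HM.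
  set (E := fun e => exists x y w, S x y /\ v x y = Fin w /\ e = w - h x y + (x^2 + y^2)).
  destruct (classic (exists e, E e /\ 0 < e)) as [[e0 [He0 Pe0]] | NE].
  2:{ intros x y Sxy; destruct (v x y) as [w|] eqn:Ev; simpl; auto.
      apply Rnot_lt_le; intro; apply NE; exists (w - h x y + (x^2 + y^2)).
      split; [exists x, y, w; auto | lra]. }
  exfalso.
  assert (HEb : bound E).
  { exists M; intros e [x [y [w [Sxy [Ev ->]]]]]; specialize (HM x y Sxy).
    rewrite Ev in HM; simpl in HM; lra. }
  destruct (completeness E HEb (ex_intro _ e0 He0)) as [m Hm].
  assert (Hm0 : 0 < m) by (specialize (proj1 Hm e0 He0); lra).
  set (d := Rmin m (r^2)).
  assert (Hd : 0 < d) by (apply Rmin_pos; nra).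
  assert (Hdm : d <= m) by apply Rmin_l.
  assert (Hdr : d <= r^2) by apply Rmin_r.
  destruct (is_lub_approx E m d Hm Hd) as [e [[px [py [w [Sp [Ev ->]]]]] He]].
  assert (Ip : I px py).
  { apply NNPP; intro N; specialize (Hcollar px py Sp N); rewrite Ev in Hcollar.
    simpl in Hcollar; lra. }
  assert (Hdisc := subharmonic_le_on_disc U v h px py r m Hv Hr
    (fun x y Hxy => HSU x y (HIS px py Ip x y Hxy))
    (fun x y Hxy => Hc x y (HIS px py Ip x y Hxy))
    (harmonic_on_subset _ _ h (fun x y Hxy => HIS px py Ip x y (Rlt_le _ _ Hxy)) Hh)).
  rewrite Ev in Hdisc; simpl in Hdisc.
  enough (w <= h px py - (px^2 + py^2) + m - r^2) by lra.
  apply Hdisc; intros x y Hxy.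
  assert (Sxy : S x y) by (apply (HIS px py Ip); unfold cdisc; lra).
  destruct (v x y) as [w'|] eqn:Ev'; simpl; auto.
  assert (w' - h x y + (x^2 + y^2) <= m) by (apply (proj1 Hm); exists x, y, w'; auto).
  lra.
Qed.

(** * Real parts of holomorphic maps *)

(* [a + i b] is holomorphic on [W] with complex derivative [P + i Q]
   (the Cauchy-Riemann equations, through the four partial derivatives). *)
Definition holo_on (W : R -> R -> Prop) (a b P Q : R -> R -> R) : Prop :=
  forall x y, W x y ->
    derivable_pt_lim (fun s => a s y) x (P x y) /\
    derivable_pt_lim (fun s => a x s) y (- Q x y) /\
    derivable_pt_lim (fun s => b s y) x (Q x y) /\
    derivable_pt_lim (fun s => b x s) y (P x y).

(* [F] is the real part of a holomorphic function on [D] with complex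
   derivative [F' + i G'], in the form of the chain rule along curves. *)
Definition re_holo_deriv (D : R -> R -> Prop) (F F' G' : R -> R -> R) : Prop :=
  forall (fa fb : R -> R) (t da db : R),
    D (fa t) (fb t) -> derivable_pt_lim fa t da -> derivable_pt_lim fb t db ->
    derivable_pt_lim (fun s => F (fa s) (fb s)) t
      (F' (fa t) (fb t) * da - G' (fa t) (fb t) * db).

Lemma re_holo_deriv_ext D F F1 G1 F2 G2 :
  (forall a b, D a b -> F1 a b = F2 a b /\ G1 a b = G2 a b) ->
  re_holo_deriv D F F1 G1 -> re_holo_deriv D F F2 G2.
Proof.
  intros E H fa fb t da db Dt Da Db.
  destruct (E _ _ Dt) as [<- <-]; exact (H fa fb t da db Dt Da Db).
Qed.

Lemma re_holo_deriv_scal c D F F' G' :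
  re_holo_deriv D F F' G' ->
  re_holo_deriv D (fun a b => c * F a b) (fun a b => c * F' a b) (fun a b => c * G' a b).
Proof.
  intros H fa fb t da db Dt Da Db.
  replace (c * F' (fa t) (fb t) * da - c * G' (fa t) (fb t) * db)
    with (c * (F' (fa t) (fb t) * da - G' (fa t) (fb t) * db)) by ring.
  apply (derivable_pt_lim_scal (fun s => F (fa s) (fb s))); auto.
Qed.

Lemma harmonic_on_re_holo W a b P Q P' Q' :
  holo_on W a b P Q -> holo_on W P Q P' Q' -> harmonic_on W a.
Proof.
  intros Hab HPQ.
  exists P, (fun x y => - Q x y), P', (fun x y => - P' x y).
  intros x y Wxy.
  destruct (Hab x y Wxy) as [Ax [Ay _]]; destruct (HPQ x y Wxy) as [Px [_ [_ Qy]]].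
  repeat split; auto.
  - apply (derivable_pt_lim_opp (fun s => Q x s)); exact Qy.
  - ring.
Qed.

Lemma harmonic_on_re_holo_comp W D a b P Q P' Q' F F' G' F'' G'' :
  holo_on W a b P Q -> holo_on W P Q P' Q' ->
  (forall x y, W x y -> D (a x y) (b x y)) ->
  re_holo_deriv D F F' G' -> re_holo_deriv D F' F'' G'' ->
  re_holo_deriv D G' G'' (fun u v => - F'' u v) ->
  harmonic_on W (fun x y => F (a x y) (b x y)).
Proof.
  intros Hab HPQ HD HF HF' HG'.
  set (f1 := fun x y => F' (a x y) (b x y)); set (g1 := fun x y => G' (a x y) (b x y)).
  set (f2 := fun x y => F'' (a x y) (b x y)); set (g2 := fun x y => G'' (a x y) (b x y)).
  exists (fun x y => f1 x y * P x y - g1 x y * Q x y),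
         (fun x y => f1 x y * - Q x y - g1 x y * P x y),
         (fun x y => (f2 x y * P x y - g2 x y * Q x y) * P x y + f1 x y * P' x y
                   - ((g2 x y * P x y - - f2 x y * Q x y) * Q x y + g1 x y * Q' x y)),
         (fun x y => (f2 x y * - Q x y - g2 x y * P x y) * - Q x y + f1 x y * - P' x y
                   - ((g2 x y * - Q x y - - f2 x y * P x y) * P x y + g1 x y * - Q' x y)).
  intros x y Wxy.
  destruct (Hab x y Wxy) as [Ax [Ay [Bx By]]].
  destruct (HPQ x y Wxy) as [Px [Py [Qx Qy]]].
  assert (Dxy := HD x y Wxy).
  repeat split.
  - exact (HF (fun s => a s y) (fun s => b s y) x _ _ Dxy Ax Bx).
  - exact (HF (fun s => a x s) (fun s => b x s) y _ _ Dxy Ay By).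
  - apply (derivable_pt_lim_minus (fun s => f1 s y * P s y) (fun s => g1 s y * Q s y)).
    + apply (derivable_pt_lim_mult (fun s => f1 s y) (fun s => P s y)); auto.
      exact (HF' (fun s => a s y) (fun s => b s y) x _ _ Dxy Ax Bx).
    + apply (derivable_pt_lim_mult (fun s => g1 s y) (fun s => Q s y)); auto.
      exact (HG' (fun s => a s y) (fun s => b s y) x _ _ Dxy Ax Bx).
  - apply (derivable_pt_lim_minus (fun s => f1 x s * - Q x s) (fun s => g1 x s * P x s)).
    + apply (derivable_pt_lim_mult (fun s => f1 x s) (fun s => - Q x s)).
      * exact (HF' (fun s => a x s) (fun s => b x s) y _ _ Dxy Ay By).
      * apply (derivable_pt_lim_opp (fun s => Q x s)); exact Qy.
    + apply (derivable_pt_lim_mult (fun s => g1 x s) (fun s => P x s)); auto.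
      exact (HG' (fun s => a x s) (fun s => b x s) y _ _ Dxy Ay By).
  - ring.
Qed.

(* [(a + i b)^g] on the half-plane [a > 0], where [atan (b/a)] is the argument. *)
Definition re_pow (g a b : R) : R := Rpower (a^2 + b^2) (g/2) * cos (g * atan (b/a)).
Definition im_pow (g a b : R) : R := Rpower (a^2 + b^2) (g/2) * sin (g * atan (b/a)).
Definition re_neg_wlogw (a b : R) : R := - (a/2) * ln (a^2 + b^2) + b * atan (b/a).

Lemma cos_atan_div a b : 0 < a -> cos (atan (b/a)) = a / sqrt (a^2 + b^2).
Proof.
  intros Ha; rewrite cos_atan.
  replace (1 + (b/a)²) with ((a^2 + b^2) / a^2) by (unfold Rsqr; field; lra).
  rewrite sqrt_div_alt, sqrt_pow2 by nra.
  assert (0 < sqrt (a^2 + b^2)) by (apply sqrt_lt_R0; nra); field; lra.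
Qed.

Lemma sin_atan_div a b : 0 < a -> sin (atan (b/a)) = b / sqrt (a^2 + b^2).
Proof.
  intros Ha; rewrite sin_atan.
  replace (1 + (b/a)²) with ((a^2 + b^2) / a^2) by (unfold Rsqr; field; lra).
  rewrite sqrt_div_alt, sqrt_pow2 by nra.
  assert (0 < sqrt (a^2 + b^2)) by (apply sqrt_lt_R0; nra); field; lra.
Qed.

Lemma derivable_pt_lim_eq_deriv f x l l' :
  derivable_pt_lim f x l -> l = l' -> derivable_pt_lim f x l'.
Proof. intros H <-; exact H. Qed.

Lemma derivable_pt_lim_abs2 (fa fb : R -> R) t da db :
  derivable_pt_lim fa t da -> derivable_pt_lim fb t db ->
  derivable_pt_lim (fun s => fa s ^ 2 + fb s ^ 2) t (2 * fa t * da + 2 * fb t * db).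
Proof.
  intros Da Db.
  replace (2 * fa t * da + 2 * fb t * db)
    with (INR 2 * fa t ^ 1 * da + INR 2 * fb t ^ 1 * db) by (simpl; ring).
  apply (derivable_pt_lim_plus (fun s => fa s ^ 2) (fun s => fb s ^ 2));
    apply (derivable_pt_lim_comp _ (fun x => x ^ 2)); auto; apply derivable_pt_lim_pow.
Qed.

Lemma derivable_pt_lim_arg (fa fb : R -> R) t da db :
  0 < fa t -> derivable_pt_lim fa t da -> derivable_pt_lim fb t db ->
  derivable_pt_lim (fun s => atan (fb s / fa s)) t
    ((fa t * db - fb t * da) / (fa t ^ 2 + fb t ^ 2)).
Proof.
  intros Ha Da Db.
  assert (H := derivable_pt_lim_comp _ atan t _ _
    (derivable_pt_lim_div fb fa t db da Db Da ltac:(lra))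
    (derivable_pt_lim_atan (fb t / fa t))).
  replace ((fa t * db - fb t * da) / (fa t ^ 2 + fb t ^ 2))
    with (/ (1 + (fb t / fa t) ^ 2) * ((db * fa t - da * fb t) / (fa t)²))
    by (unfold Rsqr; field; split; [nra | lra]).
  exact H.
Qed.

Lemma derivable_pt_lim_polar (T T' : R -> R) (fa fb : R -> R) t da db g :
  (forall x, derivable_pt_lim T x (T' x)) ->
  0 < fa t -> derivable_pt_lim fa t da -> derivable_pt_lim fb t db ->
  derivable_pt_lim (fun s => Rpower (fa s ^ 2 + fb s ^ 2) (g/2) * T (g * atan (fb s / fa s))) t
    (g/2 * Rpower (fa t ^ 2 + fb t ^ 2) (g/2 - 1) * (2 * fa t * da + 2 * fb t * db)
       * T (g * atan (fb t / fa t))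
     + Rpower (fa t ^ 2 + fb t ^ 2) (g/2)
       * (T' (g * atan (fb t / fa t))
          * (g * ((fa t * db - fb t * da) / (fa t ^ 2 + fb t ^ 2))))).
Proof.
  intros HT Ha Da Db.
  assert (Hq : 0 < fa t ^ 2 + fb t ^ 2) by nra.
  apply (derivable_pt_lim_mult (fun s => Rpower (fa s ^ 2 + fb s ^ 2) (g/2))
                               (fun s => T (g * atan (fb s / fa s)))).
  - apply (derivable_pt_lim_comp _ (fun x => Rpower x (g/2)));
      [apply derivable_pt_lim_abs2; auto | apply derivable_pt_lim_power; exact Hq].
  - apply (derivable_pt_lim_comp (fun s => g * atan (fb s / fa s)) T); [|apply HT].
    apply (derivable_pt_lim_scal (fun s => atan (fb s / fa s))).
    exact (derivable_pt_lim_arg fa fb t da db Ha Da Db).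
Qed.

(* Polar form of [w^(g-1) = w^g / w]. *)
Lemma pow_pred_polar g a b : 0 < a ->
  let q := a^2 + b^2 in let th := atan (b/a) in
  Rpower q (g/2) = Rpower q ((g-1)/2) * sqrt q /\
  Rpower q (g/2 - 1) = Rpower q ((g-1)/2) / sqrt q /\
  cos ((g-1) * th) = (cos (g * th) * a + sin (g * th) * b) / sqrt q /\
  sin ((g-1) * th) = (sin (g * th) * a - cos (g * th) * b) / sqrt q.
Proof.
  intros Ha q th.
  assert (Hq : 0 < q) by (unfold q; nra).
  replace ((g-1) * th) with (g * th - th) by ring.
  rewrite cos_minus, sin_minus; unfold th; rewrite cos_atan_div, sin_atan_div by exact Ha.
  fold q; rewrite <- Rpower_sqrt by exact Hq.
  assert (Hs : 0 < Rpower q (/ 2)) by apply exp_pos.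
  repeat split; try (field; lra).
  - rewrite <- Rpower_plus; f_equal; field.
  - apply (Rmult_eq_reg_r (Rpower q (/ 2))); [|lra].
    unfold Rdiv; rewrite Rmult_assoc, Rinv_l, Rmult_1_r, <- Rpower_plus by lra.
    f_equal; field.
Qed.

Lemma re_holo_deriv_re_pow g :
  re_holo_deriv (fun a _ => 0 < a) (re_pow g)
    (fun a b => g * re_pow (g-1) a b) (fun a b => g * im_pow (g-1) a b).
Proof.
  intros fa fb t da db Ha Da Db; unfold re_pow, im_pow.
  eapply derivable_pt_lim_eq_deriv.
  { apply (derivable_pt_lim_polar cos (fun x => - sin x) fa fb t da db g); auto.
    exact derivable_pt_lim_cos. }
  destruct (pow_pred_polar g (fa t) (fb t) Ha) as [-> [-> [-> ->]]].
  set (P := Rpower _ ((g-1)/2)).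
  assert (Hsq := sqrt_sqrt (fa t ^ 2 + fb t ^ 2) ltac:(nra)).
  assert (0 < sqrt (fa t ^ 2 + fb t ^ 2)) by (apply sqrt_lt_R0; nra).
  set (sq := sqrt _) in *; rewrite <- Hsq; field; lra.
Qed.

Lemma re_holo_deriv_im_pow g :
  re_holo_deriv (fun a _ => 0 < a) (im_pow g)
    (fun a b => g * im_pow (g-1) a b) (fun a b => - (g * re_pow (g-1) a b)).
Proof.
  intros fa fb t da db Ha Da Db; unfold re_pow, im_pow.
  eapply derivable_pt_lim_eq_deriv.
  { apply (derivable_pt_lim_polar sin cos fa fb t da db g); auto.
    exact derivable_pt_lim_sin. }
  destruct (pow_pred_polar g (fa t) (fb t) Ha) as [-> [-> [-> ->]]].
  set (P := Rpower _ ((g-1)/2)).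
  assert (Hsq := sqrt_sqrt (fa t ^ 2 + fb t ^ 2) ltac:(nra)).
  assert (0 < sqrt (fa t ^ 2 + fb t ^ 2)) by (apply sqrt_lt_R0; nra).
  set (sq := sqrt _) in *; rewrite <- Hsq; field; lra.
Qed.

Lemma re_holo_deriv_re_neg_wlogw :
  re_holo_deriv (fun a _ => 0 < a) re_neg_wlogw
    (fun a b => - (ln (a^2 + b^2) / 2 + 1)) (fun a b => - atan (b/a)).
Proof.
  intros fa fb t da db Ha Da Db; unfold re_neg_wlogw.
  assert (Hq : 0 < fa t ^ 2 + fb t ^ 2) by nra.
  eapply derivable_pt_lim_eq_deriv.
  { apply (derivable_pt_lim_plus (fun s => - (fa s / 2) * ln (fa s ^ 2 + fb s ^ 2))
                                 (fun s => fb s * atan (fb s / fa s))).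
    - apply (derivable_pt_lim_mult (fun s => - (fa s / 2))).
      + apply (derivable_pt_lim_opp (fun s => fa s / 2)).
        apply (derivable_pt_lim_div_scal fa); exact Da.
      + apply (derivable_pt_lim_comp (fun s => fa s ^ 2 + fb s ^ 2) ln).
        * exact (derivable_pt_lim_abs2 fa fb t da db Da Db).
        * apply derivable_pt_lim_ln; exact Hq.
    - apply (derivable_pt_lim_mult fb);
        [exact Db | exact (derivable_pt_lim_arg fa fb t da db Ha Da Db)]. }
  cbv beta; field; lra.
Qed.

Lemma re_holo_deriv_neg_log :
  re_holo_deriv (fun a _ => 0 < a) (fun a b => - (ln (a^2 + b^2) / 2 + 1))
    (fun a b => - (a / (a^2 + b^2))) (fun a b => b / (a^2 + b^2)).
Proof.
  intros fa fb t da db Ha Da Db.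
  assert (Hq : 0 < fa t ^ 2 + fb t ^ 2) by nra.
  eapply derivable_pt_lim_eq_deriv.
  { apply (derivable_pt_lim_opp (fun s => ln (fa s ^ 2 + fb s ^ 2) / 2 + 1)).
    apply (derivable_pt_lim_plus _ (fun _ => 1)); [|apply derivable_pt_lim_const].
    apply (derivable_pt_lim_div_scal (fun s => ln (fa s ^ 2 + fb s ^ 2))).
    apply (derivable_pt_lim_comp (fun s => fa s ^ 2 + fb s ^ 2) ln).
    - exact (derivable_pt_lim_abs2 fa fb t da db Da Db).
    - apply derivable_pt_lim_ln; exact Hq. }
  cbv beta; field; lra.
Qed.

Lemma re_holo_deriv_neg_arg :
  re_holo_deriv (fun a _ => 0 < a) (fun a b => - atan (b/a))
    (fun a b => b / (a^2 + b^2)) (fun a b => a / (a^2 + b^2)).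
Proof.
  intros fa fb t da db Ha Da Db.
  assert (Hq : 0 < fa t ^ 2 + fb t ^ 2) by nra.
  eapply derivable_pt_lim_eq_deriv.
  { apply (derivable_pt_lim_opp (fun s => atan (fb s / fa s))).
    exact (derivable_pt_lim_arg fa fb t da db Ha Da Db). }
  cbv beta; field; lra.
Qed.

Lemma harmonic_on_re_pow_comp W a b P Q P' Q' g :
  holo_on W a b P Q -> holo_on W P Q P' Q' -> (forall x y, W x y -> 0 < a x y) ->
  harmonic_on W (fun x y => re_pow g (a x y) (b x y)).
Proof.
  intros Hab HPQ Ha.
  apply (harmonic_on_re_holo_comp W (fun a _ => 0 < a) a b P Q P' Q' (re_pow g)
    (fun a b => g * re_pow (g-1) a b) (fun a b => g * im_pow (g-1) a b)
    (fun a b => g * ((g-1) * re_pow (g-1-1) a b))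
    (fun a b => g * ((g-1) * im_pow (g-1-1) a b))); auto.
  - apply re_holo_deriv_re_pow.
  - apply (re_holo_deriv_scal g), re_holo_deriv_re_pow.
  - eapply re_holo_deriv_ext; [|apply (re_holo_deriv_scal g), re_holo_deriv_im_pow].
    intros; split; ring.
Qed.

Lemma harmonic_on_re_neg_wlogw_comp W a b P Q P' Q' :
  holo_on W a b P Q -> holo_on W P Q P' Q' -> (forall x y, W x y -> 0 < a x y) ->
  harmonic_on W (fun x y => re_neg_wlogw (a x y) (b x y)).
Proof.
  intros Hab HPQ Ha.
  apply (harmonic_on_re_holo_comp W (fun a _ => 0 < a) a b P Q P' Q' re_neg_wlogw
    (fun a b => - (ln (a^2 + b^2) / 2 + 1)) (fun a b => - atan (b/a))
    (fun a b => - (a / (a^2 + b^2))) (fun a b => b / (a^2 + b^2))); auto.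
  - apply re_holo_deriv_re_neg_wlogw.
  - apply re_holo_deriv_neg_log.
  - eapply re_holo_deriv_ext; [|apply re_holo_deriv_neg_arg].
    intros; split; ring.
Qed.

Lemma continuity_2d_pt_re_pow_comp g (a b : R -> R -> R) x y :
  0 < a x y -> continuity_2d_pt a x y -> continuity_2d_pt b x y ->
  continuity_2d_pt (fun u v => re_pow g (a u v) (b u v)) x y.
Proof.
  intros Ha Ca Cb; unfold re_pow.
  apply continuity_2d_pt_mult.
  - apply (continuity_2d_pt_comp_derivable (fun t => Rpower t (g/2))
             (g/2 * Rpower (a x y ^ 2 + b x y ^ 2) (g/2 - 1)));
      [apply derivable_pt_lim_power; nra | apply continuity_2d_pt_abs2; auto].
  - apply (continuity_2d_pt_comp_derivable cos _ _ _ _ (derivable_pt_lim_cos _)).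
    apply continuity_2d_pt_mult;
      [apply continuity_2d_pt_const | apply continuity_2d_pt_arg; auto].
Qed.

Lemma continuity_2d_pt_re_neg_wlogw_comp (a b : R -> R -> R) x y :
  0 < a x y -> continuity_2d_pt a x y -> continuity_2d_pt b x y ->
  continuity_2d_pt (fun u v => re_neg_wlogw (a u v) (b u v)) x y.
Proof.
  intros Ha Ca Cb; unfold re_neg_wlogw.
  apply continuity_2d_pt_plus; apply continuity_2d_pt_mult; auto.
  - apply continuity_2d_pt_opp, continuity_2d_pt_div; auto using continuity_2d_pt_const; lra.
  - apply (continuity_2d_pt_comp_derivable ln (/ (a x y ^ 2 + b x y ^ 2)));
      [apply derivable_pt_lim_ln; nra | apply continuity_2d_pt_abs2; auto].
  - apply continuity_2d_pt_arg; auto.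
Qed.

Lemma re_pow_real_axis g a : 0 < a -> re_pow g a 0 = Rpower a g.
Proof.
  intros Ha; unfold re_pow, Rpower.
  replace (0/a) with 0 by (field; lra).
  rewrite atan_0, Rmult_0_r, cos_0, Rmult_1_r.
  replace (a^2 + 0^2) with (a * a) by ring; rewrite ln_mult by exact Ha.
  f_equal; field.
Qed.

Lemma re_neg_wlogw_real_axis a : 0 < a -> re_neg_wlogw a 0 = - a * ln a.
Proof.
  intros Ha; unfold re_neg_wlogw.
  replace (a^2 + 0^2) with (a * a) by ring; rewrite ln_mult by exact Ha; field.
Qed.

(** * The Moebius map *)

(* Real and imaginary parts of [w = 2z/(z-2) = 2 + 4/(z-2)] and of its
   derivatives [-4/(z-2)^2] and [8/(z-2)^3]. *)
Definition mob_den (x y : R) : R := (x - 2)^2 + y^2.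
Definition mob_re (x y : R) : R := 2 + 4 * (x - 2) / mob_den x y.
Definition mob_im (x y : R) : R := - 4 * y / mob_den x y.
Definition mob_d_re (x y : R) : R := 4 * (y^2 - (x - 2)^2) / mob_den x y ^ 2.
Definition mob_d_im (x y : R) : R := 8 * (x - 2) * y / mob_den x y ^ 2.
Definition mob_dd_re (x y : R) : R := 8 * ((x - 2)^3 - 3 * (x - 2) * y^2) / mob_den x y ^ 3.
Definition mob_dd_im (x y : R) : R := 8 * (y^3 - 3 * (x - 2)^2 * y) / mob_den x y ^ 3.

Ltac derive_rational :=
  apply is_derive_Reals; auto_derive;
  [repeat split; apply Rgt_not_eq; nra | field; repeat split; apply Rgt_not_eq; nra].

Lemma holo_on_mob k (W : R -> R -> Prop) :
  (forall x y, W x y -> 0 < mob_den x y) ->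
  holo_on W (fun x y => k + mob_re x y) mob_im mob_d_re mob_d_im.
Proof.
  intros HW x y Wxy; specialize (HW x y Wxy).
  unfold mob_re, mob_im, mob_d_re, mob_d_im, mob_den in *.
  repeat split; derive_rational.
Qed.

Lemma holo_on_mob_d (W : R -> R -> Prop) :
  (forall x y, W x y -> 0 < mob_den x y) ->
  holo_on W mob_d_re mob_d_im mob_dd_re mob_dd_im.
Proof.
  intros HW x y Wxy; specialize (HW x y Wxy).
  unfold mob_d_re, mob_d_im, mob_dd_re, mob_dd_im, mob_den in *.
  repeat split; derive_rational.
Qed.

Lemma continuity_2d_pt_mob_den x y : continuity_2d_pt mob_den x y.
Proof.
  apply continuity_2d_pt_abs2;
    auto using continuity_2d_pt_minus, continuity_2d_pt_id1, continuity_2d_pt_id2,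
               continuity_2d_pt_const.
Qed.

Lemma continuity_2d_pt_mob k x y :
  0 < mob_den x y ->
  continuity_2d_pt (fun u v => k + mob_re u v) x y /\ continuity_2d_pt mob_im x y.
Proof.
  intros HD; split.
  - apply continuity_2d_pt_plus; [apply continuity_2d_pt_const|].
    apply continuity_2d_pt_plus; [apply continuity_2d_pt_const|].
    apply continuity_2d_pt_div; [lra | | apply continuity_2d_pt_mob_den].
    auto using continuity_2d_pt_mult, continuity_2d_pt_minus, continuity_2d_pt_id1,
               continuity_2d_pt_const.
  - apply continuity_2d_pt_div; [lra | | apply continuity_2d_pt_mob_den].
    auto using continuity_2d_pt_mult, continuity_2d_pt_id2, continuity_2d_pt_const.
Qed.

Definition mob_dom (k x y : R) : Prop := 0 < mob_den x y /\ 0 < k + mob_re x y.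

Lemma harmonic_on_mob_re k : harmonic_on (mob_dom k) (fun x y => k + mob_re x y).
Proof.
  apply (harmonic_on_re_holo _ _ mob_im mob_d_re mob_d_im mob_dd_re mob_dd_im);
    [apply holo_on_mob | apply holo_on_mob_d]; intros x y [HD _]; exact HD.
Qed.

Lemma harmonic_on_re_pow_mob g k :
  harmonic_on (mob_dom k) (fun x y => re_pow g (k + mob_re x y) (mob_im x y)).
Proof.
  apply (harmonic_on_re_pow_comp _ _ _ mob_d_re mob_d_im mob_dd_re mob_dd_im).
  - apply holo_on_mob; intros x y [HD _]; exact HD.
  - apply holo_on_mob_d; intros x y [HD _]; exact HD.
  - intros x y [_ Ha]; exact Ha.
Qed.

Lemma harmonic_on_re_neg_wlogw_mob k :
  harmonic_on (mob_dom k) (fun x y => re_neg_wlogw (k + mob_re x y) (mob_im x y)).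
Proof.
  apply (harmonic_on_re_neg_wlogw_comp _ _ _ mob_d_re mob_d_im mob_dd_re mob_dd_im).
  - apply holo_on_mob; intros x y [HD _]; exact HD.
  - apply holo_on_mob_d; intros x y [HD _]; exact HD.
  - intros x y [_ Ha]; exact Ha.
Qed.

Lemma continuity_2d_pt_re_pow_mob g k x y : mob_dom k x y ->
  continuity_2d_pt (fun x y => re_pow g (k + mob_re x y) (mob_im x y)) x y.
Proof.
  intros [HD Ha]; destruct (continuity_2d_pt_mob k x y HD).
  apply continuity_2d_pt_re_pow_comp; auto.
Qed.

Lemma continuity_2d_pt_re_neg_wlogw_mob k x y : mob_dom k x y ->
  continuity_2d_pt (fun x y => re_neg_wlogw (k + mob_re x y) (mob_im x y)) x y.
Proof.
  intros [HD Ha]; destruct (continuity_2d_pt_mob k x y HD).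
  apply continuity_2d_pt_re_neg_wlogw_comp; auto.
Qed.

(** * Geometry of the cut disc *)

(* By [mob_abs2], in the coordinate [w = 2z/(z-2)] these regions are
   [|w| <= 1/4, Re w >= -k/2] and [|w| < 1/8, Re w > 0]. *)
Definition cut_disc (k x y : R) : Prop :=
  64 * (x^2 + y^2) <= mob_den x y /\ - (k/2) <= mob_re x y.
Definition core_half_disc (x y : R) : Prop :=
  256 * (x^2 + y^2) < mob_den x y /\ 0 < mob_re x y.

Lemma mob_abs2 x y :
  0 < mob_den x y -> mob_re x y ^ 2 + mob_im x y ^ 2 = 4 * (x^2 + y^2) / mob_den x y.
Proof. unfold mob_re, mob_im, mob_den; intros; field; lra. Qed.

Lemma mob_dist2 x y px py :
  0 < mob_den x y -> 0 < mob_den px py ->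
  (mob_re x y - mob_re px py) ^ 2 + (mob_im x y - mob_im px py) ^ 2 =
  16 * dist2 x y px py / (mob_den x y * mob_den px py).
Proof. unfold mob_re, mob_im, mob_den, dist2; intros; field; lra. Qed.

Lemma near_origin_of_mob_small x y :
  64 * (x^2 + y^2) <= mob_den x y ->
  0 < mob_den x y /\ x^2 + y^2 <= 4/49 /\ mob_den x y <= 6.
Proof.
  unfold mob_den; intros H.
  assert (H2 : x^2 + y^2 <= 4/49).
  { apply Rnot_lt_le; intro; assert (x < 0) by nra.
    assert (16 * x^2 >= (63 * (x^2 + y^2) - 4)^2) by nra.
    nra. }
  repeat split; auto; nra.
Qed.

Lemma mob_re_nonpos_cdisc x y :
  0 < mob_den x y -> mob_re x y <= 0 -> cdisc 1 0 1 x y.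
Proof.
  unfold mob_re, mob_den, cdisc, dist2; intros HD Hm.
  replace (2 + 4 * (x - 2) / ((x - 2) ^ 2 + y ^ 2))
    with ((2 * ((x-2)^2 + y^2) + 4 * (x-2)) / ((x - 2) ^ 2 + y ^ 2)) in Hm by (field; lra).
  assert (2 * ((x-2)^2 + y^2) + 4 * (x-2) <= 0).
  { apply Rnot_lt_le; intro.
    assert (0 < (2 * ((x-2)^2 + y^2) + 4 * (x-2)) / ((x - 2) ^ 2 + y ^ 2))
      by (apply Rdiv_lt_0_compat; lra).
    lra. }
  nra.
Qed.

Lemma cut_disc_sub_big_disc k x y : cut_disc k x y -> cdisc (-1) 0 3 x y.
Proof.
  intros [H _]; destruct (near_origin_of_mob_small x y H) as [_ [H2 _]].
  unfold cdisc, dist2; nra.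
Qed.

Lemma cut_disc_sub_dom k x y : 0 < k -> cut_disc k x y -> mob_dom k x y.
Proof.
  intros Hk [H H']; destruct (near_origin_of_mob_small x y H) as [HD _].
  split; [exact HD | lra].
Qed.

Lemma cut_disc_abs2_bounds k x y : 0 < k <= 1/8 -> cut_disc k x y ->
  mob_re x y ^ 2 + mob_im x y ^ 2 <= (k + mob_re x y) ^ 2 + mob_im x y ^ 2 <= 9/64.
Proof.
  intros Hk [H H']; destruct (near_origin_of_mob_small x y H) as [HD _].
  assert (mob_re x y ^ 2 + mob_im x y ^ 2 <= 1/16).
  { rewrite mob_abs2 by exact HD.
    apply (Rmult_le_reg_r (mob_den x y)); auto.
    unfold Rdiv; rewrite Rmult_assoc, Rinv_l by lra; lra. }
  split; [nra|].
  assert (mob_re x y <= 1/4) by nra; nra.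
Qed.

(* [|w|^2 = 4|z|^2/|z-2|^2] and [|z-2|^2 <= 6] on the cut disc. *)
Lemma cut_disc_abs2_le k x y : 0 < k <= 1/8 -> cut_disc k x y ->
  x^2 + y^2 <= 3/2 * ((k + mob_re x y) ^ 2 + mob_im x y ^ 2).
Proof.
  intros Hk S; destruct (near_origin_of_mob_small x y (proj1 S)) as [HD [_ HD6]].
  destruct (cut_disc_abs2_bounds k x y Hk S) as [Hq _].
  assert (E := mob_abs2 x y HD).
  replace (x^2 + y^2) with ((mob_re x y ^ 2 + mob_im x y ^ 2) * mob_den x y / 4)
    by (rewrite E; field; lra).
  pose proof (pow2_ge_0 (mob_re x y)); pose proof (pow2_ge_0 (mob_im x y)); nra.
Qed.

Lemma core_disc_sub_cut_disc k r px py x y :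
  0 < r -> r <= k/8 -> r <= 1/32 ->
  core_half_disc px py -> cdisc px py r x y -> cut_disc k x y.
Proof.
  intros Hr Hrk Hr32 [Hp Hp'] Hc; unfold cdisc in Hc.
  destruct (near_origin_of_mob_small px py ltac:(nra)) as [HDp [Hp2 _]].
  assert (Hdx : (x - px)^2 <= r^2)
    by (unfold dist2 in Hc; pose proof (pow2_ge_0 (y - py)); lra).
  assert (Hpx : px <= 2/7) by (apply Rnot_lt_le; intro; nra).
  assert (Hx : x <= px + r) by (apply Rnot_lt_le; intro; nra).
  assert (HDz : 5/2 <= mob_den x y) by (unfold mob_den; nra).
  assert (HDp2 : 5/2 <= mob_den px py) by (unfold mob_den; nra).
  assert (HDzp : 6 <= mob_den x y * mob_den px py) by nra.
  assert (Hdel : (mob_re x y - mob_re px py) ^ 2 + (mob_im x y - mob_im px py) ^ 2 <= 3 * r^2).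
  { rewrite mob_dist2 by lra.
    apply (Rmult_le_reg_r (mob_den x y * mob_den px py)); [lra|].
    unfold Rdiv; rewrite Rmult_assoc, Rinv_l by lra; unfold dist2 in *; nra. }
  assert (Hp64 : mob_re px py ^ 2 + mob_im px py ^ 2 < 1/64).
  { rewrite mob_abs2 by lra.
    apply (Rmult_lt_reg_r (mob_den px py)); [lra|].
    unfold Rdiv; rewrite Rmult_assoc, Rinv_l by lra; nra. }
  split.
  - assert (Hz : mob_re x y ^ 2 + mob_im x y ^ 2 <= 1/16).
    { pose proof (pow2_ge_0 (mob_re x y - 2 * mob_re px py)).
      pose proof (pow2_ge_0 (mob_im x y - 2 * mob_im px py)); nra. }
    rewrite mob_abs2 in Hz by lra.
    apply (Rmult_le_reg_r (/ mob_den x y)); [apply Rinv_0_lt_compat; lra|].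
    rewrite Rinv_r by lra; unfold Rdiv in Hz; lra.
  - assert ((mob_re x y - mob_re px py) ^ 2 <= 3 * r^2)
      by (pose proof (pow2_ge_0 (mob_im x y - mob_im px py)); lra).
    apply Rnot_lt_le; intro; nra.
Qed.

Lemma neg_axis_cut_disc k s : 0 < k -> 0 < s <= 2/7 ->
  cut_disc k (-s) 0 /\ mob_re (-s) 0 = 2 * s / (s + 2) /\ mob_im (-s) 0 = 0.
Proof.
  intros Hk Hs; unfold cut_disc, mob_re, mob_im, mob_den.
  replace ((-s - 2)^2 + 0^2) with ((s + 2)^2) by ring.
  replace (2 + 4 * (- s - 2) / (s + 2) ^ 2) with (2 * s / (s + 2)) by (field; lra).
  assert (0 < 2 * s / (s + 2)) by (apply Rdiv_lt_0_compat; lra).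
  repeat split; try nra; try lra; field; lra.
Qed.

Lemma neg_axis_mob_bounds s : 0 < s <= 1/2 -> s <= s/4 + 2 * s / (s + 2) <= 5/4 * s.
Proof.
  intros Hs.
  assert (E : 2 * s / (s + 2) * (s + 2) = 2 * s) by (field; lra).
  assert (4/5 * s <= 2 * s / (s + 2) <= s).
  { split; apply (Rmult_le_reg_r (s + 2)); try lra; rewrite E; nra. }
  lra.
Qed.

(** * Barriers *)

Lemma Rpower_pos b e : 0 < Rpower b e.
Proof. apply exp_pos. Qed.

Lemma Rpower_le_exp_le1 b e1 e2 : 0 < b <= 1 -> e2 <= e1 -> Rpower b e1 <= Rpower b e2.
Proof.
  intros Hb He; unfold Rpower.
  assert (ln b <= 0) by (rewrite <- ln_1; apply ln_le; lra).
  destruct (Req_dec (e1 * ln b) (e2 * ln b)) as [-> | N]; [lra|].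
  left; apply exp_increasing; nra.
Qed.

Lemma Rpower_ge_base b e : 0 < b <= 1 -> e <= 1 -> b <= Rpower b e.
Proof.
  intros Hb He; rewrite <- (Rpower_1 b) at 1 by lra.
  apply Rpower_le_exp_le1; auto.
Qed.

Lemma Rpower_half q : 0 < q -> Rpower q (1/2) = sqrt q.
Proof. intros; rewrite <- Rpower_sqrt by auto; f_equal; field. Qed.

Lemma Rpower_le_scale a s g : 0 < s -> 0 < a <= 5/4 * s -> 0 < g <= 1 ->
  Rpower a g <= 5/4 * Rpower s g.
Proof.
  intros Hs Ha Hg.
  apply Rle_trans with (Rpower (5/4 * s) g); [apply Rle_Rpower_l; lra|].
  rewrite <- Rpower_mult_distr by lra.
  assert (Rpower (5/4) g <= 5/4)
    by (rewrite <- (Rpower_1 (5/4)) at 2 by lra; apply Rle_Rpower; lra).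
  pose proof (Rpower_pos s g); nra.
Qed.

Lemma PI_gt_3 : 3 < PI.
Proof. pose proof PI2_3_2; lra. Qed.

Lemma cos_pos_frac_half_PI a : 0 < a < 1 -> 0 < cos (a * (PI/2)).
Proof. intros; pose proof PI_RGT_0; apply cos_gt_0; nra. Qed.

Lemma polar_right_half_plane a b : 0 < a ->
  let th := Rabs (atan (b/a)) in
  a = sqrt (a^2 + b^2) * cos th /\
  b * atan (b/a) = sqrt (a^2 + b^2) * (th * sin th) /\
  0 <= th < PI/2 /\
  (forall c, cos (c * atan (b/a)) = cos (c * th)).
Proof.
  intros Ha th.
  assert (0 < sqrt (a^2 + b^2)) by (apply sqrt_lt_R0; nra).
  assert (C := cos_atan_div a b Ha); assert (S := sin_atan_div a b Ha).
  assert (B := atan_bound (b/a)).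
  unfold th; destruct (Rle_or_lt 0 (atan (b/a))).
  - rewrite Rabs_pos_eq by lra; repeat split; try lra.
    + rewrite C; field; lra.
    + rewrite S; field; lra.
  - rewrite Rabs_left by lra; repeat split; try lra.
    + rewrite cos_neg, C; field; lra.
    + rewrite sin_neg, S; field; lra.
    + intros c; rewrite <- cos_neg; f_equal; ring.
Qed.

(* [|w|^2 <= 9/64] holds on the cut disc; the factor [128] absorbs the
   bounds [u <= |z|^alpha] and [u <= 1] on the two parts of the collar. *)
Definition barrier (be : R) (H : R -> R -> R) : Prop :=
  forall a b, 0 < a -> a^2 + b^2 <= 9/64 -> 128 * Rpower (a^2 + b^2) (be/2) <= H a b.

Lemma barrier_re_pow al : 0 < al < 1 ->
  barrier al (fun a b => 128 / cos (al * (PI/2)) * re_pow al a b).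
Proof.
  intros Hal a b Ha _.
  assert (Hc := cos_pos_frac_half_PI al Hal).
  destruct (polar_right_half_plane a b Ha) as [_ [_ [Hth Hcos]]].
  unfold re_pow; rewrite Hcos.
  assert (cos (al * (PI/2)) <= cos (al * Rabs (atan (b/a))))
    by (apply cos_decr_1; pose proof PI_RGT_0; nra).
  pose proof (Rpower_pos (a^2 + b^2) (al/2)).
  set (P := Rpower (a^2 + b^2) (al/2)) in *.
  replace (128 * P) with (128 / cos (al * (PI/2)) * (P * cos (al * (PI/2)))) by (field; lra).
  apply Rmult_le_compat_l; [apply Rlt_le, Rdiv_lt_0_compat; lra|].
  apply Rmult_le_compat_l; lra.
Qed.

Lemma barrier_re_neg_wlogw : barrier 1 (fun a b => 512 * re_neg_wlogw a b).
Proof.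
  intros a b Ha Hq; unfold re_neg_wlogw.
  destruct (polar_right_half_plane a b Ha) as [Ea [Eb [Hth _]]].
  assert (Hq0 : 0 < a^2 + b^2) by nra.
  rewrite Rpower_half by exact Hq0.
  set (q := a^2 + b^2) in *; set (th := Rabs (atan (b/a))) in *.
  rewrite Eb; rewrite Ea at 1.
  assert (Hln : ln q <= -1).
  { rewrite <- (ln_exp (-1)); apply ln_le; [exact Hq0|].
    replace (exp (-1)) with (/ exp 1) by (rewrite <- exp_Ropp; f_equal; ring).
    pose proof exp_le_3; pose proof (exp_pos 1).
    apply (Rmult_le_reg_r (exp 1)); [lra|]; rewrite Rinv_l by lra; nra. }
  assert (Htrig : 1/4 <= - ln q / 2 * cos th + th * sin th).
  { pose proof PI_gt_3.
    assert (0 <= cos th) by (apply cos_ge_0; lra).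
    assert (0 <= sin th) by (apply sin_ge_0; lra).
    destruct (Rle_or_lt th (PI/3)).
    - assert (cos (PI/3) <= cos th) by (apply cos_decr_1; lra).
      rewrite cos_PI3 in *; nra.
    - assert (sin (PI/6) <= sin th) by (apply sin_incr_1; lra).
      rewrite sin_PI6 in *; nra. }
  assert (0 < sqrt q) by (apply sqrt_lt_R0; exact Hq0).
  assert (sqrt q * (1/4) <= sqrt q * (- ln q / 2 * cos th + th * sin th))
    by (apply Rmult_le_compat_l; lra).
  nra.
Qed.

Definition sub_pow_coef (g : R) : R := 256 / sin ((g - 1) * (PI/3)).

Lemma sub_pow_coef_pos g : 1 < g <= 3/2 -> 0 < sub_pow_coef g.
Proof.
  intros Hg; pose proof PI_gt_3.
  apply Rdiv_lt_0_compat; [lra|]; apply sin_gt_0; nra.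
Qed.

(* For [th <= PI/3] the term [256 cos th] suffices; beyond, expanding
   [cos (g th) = cos (th + (g-1) th)] leaves [B om sin th sin ((g-1) th)],
   which is at least [128 om] by the choice of [B]. *)
Lemma sub_pow_trig g om th : 1 < g <= 3/2 -> 0 <= om <= 1 -> 0 <= th < PI/2 ->
  128 * om <= (sub_pow_coef g + 256) * cos th - sub_pow_coef g * om * cos (g * th).
Proof.
  intros Hg Hom Hth; pose proof PI_gt_3.
  assert (HB := sub_pow_coef_pos g Hg).
  assert (HBs : sub_pow_coef g * sin ((g-1) * (PI/3)) = 256).
  { unfold sub_pow_coef; field; apply Rgt_not_eq, sin_gt_0; nra. }
  set (B := sub_pow_coef g) in *; clearbody B.
  assert (0 <= cos th) by (apply cos_ge_0; lra).
  assert (0 <= sin th) by (apply sin_ge_0; lra).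
  assert (0 <= sin ((g-1) * th)) by (apply sin_ge_0; nra).
  assert (om * cos ((g-1) * th) <= 1)
    by (pose proof (COS_bound ((g-1) * th)); destruct (Rle_or_lt 0 (cos ((g-1) * th))); nra).
  replace (g * th) with (th + (g-1) * th) by ring; rewrite cos_plus.
  assert (0 <= B * om * sin th * sin ((g-1) * th))
    by (repeat apply Rmult_le_pos; lra).
  assert (0 <= B * cos th * (1 - om * cos ((g-1) * th)))
    by (repeat apply Rmult_le_pos; lra).
  destruct (Rle_or_lt th (PI/3)).
  - assert (cos (PI/3) <= cos th) by (apply cos_decr_1; lra).
    rewrite cos_PI3 in *; nra.
  - assert (sin (PI/6) <= sin th) by (apply sin_incr_1; lra).
    assert (sin ((g-1) * (PI/3)) <= sin ((g-1) * th)) by (apply sin_incr_1; nra).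
    rewrite sin_PI6 in *.
    assert (B * om * (1/2) * sin ((g-1) * (PI/3)) <= B * om * sin th * sin ((g-1) * th)).
    { assert (0 <= B * om) by (apply Rmult_le_pos; lra).
      apply Rmult_le_compat; [nra | apply sin_ge_0; nra | nra | lra]. }
    nra.
Qed.

Lemma barrier_sub_pow g : 1 < g <= 3/2 ->
  barrier g (fun a b => (sub_pow_coef g + 256) * a + (- sub_pow_coef g) * re_pow g a b).
Proof.
  intros Hg a b Ha Hq; unfold re_pow.
  destruct (polar_right_half_plane a b Ha) as [Ea [_ [Hth Hcos]]].
  rewrite Hcos.
  assert (Hq0 : 0 < a^2 + b^2) by nra.
  destruct (pow_pred_polar g a b Ha) as [-> _].
  set (q := a^2 + b^2) in *; set (th := Rabs (atan (b/a))) in *.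
  rewrite Ea at 1.
  set (om := Rpower q ((g-1)/2)).
  assert (Hom1 : om <= 1).
  { apply Rle_trans with (Rpower q 0); [apply Rpower_le_exp_le1; lra|].
    rewrite Rpower_O by exact Hq0; lra. }
  assert (Hom0 : 0 <= om) by (left; apply Rpower_pos).
  assert (T := sub_pow_trig g om th Hg (conj Hom0 Hom1) Hth).
  assert (0 < sqrt q) by (apply sqrt_lt_R0; exact Hq0).
  assert (sqrt q * (128 * om)
          <= sqrt q * ((sub_pow_coef g + 256) * cos th - sub_pow_coef g * om * cos (g * th)))
    by (apply Rmult_le_compat_l; lra).
  nra.
Qed.

Definition admissible (al : R) (U : R -> R -> Prop) (u : R -> R -> ER) : Prop :=
  (forall x y, cdisc (-1) 0 3 x y -> U x y) /\ qsh_lap_ge_m1 U u /\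
  (forall x y, cdisc (-1) 0 3 x y -> ER_le (u x y) 1) /\
  (forall x y, cdisc 1 0 1 x y -> ER_le (u x y) (rpow (modz x y) al)).

Lemma rpow_modz al x y :
  0 < al -> 0 < x^2 + y^2 -> rpow (modz x y) al = Rpower (x^2 + y^2) (al/2).
Proof.
  intros Hal Hz; unfold rpow, modz.
  assert (0 < sqrt (x^2 + y^2)) by (apply sqrt_lt_R0; exact Hz).
  destruct (Rle_dec (sqrt (x^2 + y^2)) 0); [lra|].
  rewrite <- Rpower_sqrt, Rpower_mult by exact Hz; f_equal; field.
Qed.

Lemma rpow_modz_le al be q x y : 0 < be <= 2 -> be <= al -> 0 < q ->
  x^2 + y^2 <= 1 -> x^2 + y^2 <= 3/2 * q -> rpow (modz x y) al <= 3/2 * Rpower q (be/2).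
Proof.
  intros Hbe Hbal Hq Hz1 Hzq; pose proof (Rpower_pos q (be/2)).
  destruct (Req_dec (x^2 + y^2) 0) as [Z | NZ].
  { unfold rpow, modz; rewrite Z, sqrt_0; destruct (Rle_dec 0 0); lra. }
  assert (Hz0 : 0 < x^2 + y^2) by (pose proof (pow2_ge_0 x); pose proof (pow2_ge_0 y); lra).
  rewrite rpow_modz by lra.
  assert (Rpower (x^2 + y^2) (al/2) <= Rpower (x^2 + y^2) (be/2))
    by (apply Rpower_le_exp_le1; lra).
  assert (Rpower (x^2 + y^2) (be/2) <= Rpower (3/2) (be/2) * Rpower q (be/2))
    by (rewrite Rpower_mult_distr by lra; apply Rle_Rpower_l; lra).
  assert (Rpower (3/2) (be/2) <= 3/2)
    by (rewrite <- (Rpower_1 (3/2)) at 2 by lra; apply Rle_Rpower; lra).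
  nra.
Qed.

Lemma admissible_le_1 al U u s : admissible al U u -> 0 < s <= 1/2 -> ER_le (u (-s) 0) 1.
Proof. intros [_ [_ [Hu1 _]]] Hs; apply Hu1; unfold cdisc, dist2; nra. Qed.

Lemma admissible_origin al U u : admissible al U u -> ER_le (u 0 0) 0.
Proof.
  intros [_ [_ [_ Hual]]].
  specialize (Hual 0 0 ltac:(unfold cdisc, dist2; lra)).
  unfold rpow, modz in Hual; replace (0^2 + 0^2) with 0 in Hual by ring.
  rewrite sqrt_0 in Hual; destruct (Rle_dec 0 0); [exact Hual | lra].
Qed.

Lemma admissible_le_on_collar al be k H U u x y :
  admissible al U u -> 0 < k <= 1/8 -> 0 < be <= 2 -> be <= al -> barrier be H ->
  cut_disc k x y -> ~ core_half_disc x y ->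
  ER_le (u x y) (H (k + mob_re x y) (mob_im x y) - 5/4 * (x^2 + y^2)).
Proof.
  intros [_ [_ [Hu1 Hual]]] Hk Hbe Hbal HH S NI.
  destruct (near_origin_of_mob_small x y (proj1 S)) as [HD [Hz _]].
  destruct (cut_disc_sub_dom k x y ltac:(lra) S) as [_ Ha].
  destruct (cut_disc_abs2_bounds k x y Hk S) as [Hq1 Hq2].
  assert (Hz3 := cut_disc_abs2_le k x y Hk S).
  set (q := (k + mob_re x y) ^ 2 + mob_im x y ^ 2) in *.
  assert (Hq0 : 0 < q) by (unfold q; nra).
  assert (HP := HH _ _ Ha Hq2); fold q in HP.
  set (P := Rpower q (be/2)) in *.
  assert (HqP : q <= P) by (apply Rpower_ge_base; lra).
  destruct (Rle_or_lt (mob_re x y) 0) as [Hin | Hout].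
  - specialize (Hual x y (mob_re_nonpos_cdisc x y HD Hin)).
    assert (Hpow := rpow_modz_le al be q x y Hbe Hbal Hq0 ltac:(lra) Hz3); fold P in Hpow.
    destruct (u x y); simpl in *; auto; lra.
  - assert (Hcollar : mob_den x y <= 256 * (x^2 + y^2))
      by (apply Rnot_lt_le; intro; apply NI; split; assumption).
    assert (1/64 <= mob_re x y ^ 2 + mob_im x y ^ 2).
    { rewrite mob_abs2 by exact HD.
      apply (Rmult_le_reg_r (mob_den x y)); [lra|].
      replace (4 * (x^2 + y^2) / mob_den x y * mob_den x y) with (4 * (x^2 + y^2))
        by (field; lra); lra. }
    specialize (Hu1 x y (cut_disc_sub_big_disc k x y S)).
    destruct (u x y) as [w|]; simpl in *; auto; lra.
Qed.

Lemma admissible_le_barrier_on_cut_disc al be k H U u :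
  admissible al U u -> 0 < k <= 1/8 -> 0 < be <= 2 -> be <= al -> barrier be H ->
  harmonic_on (mob_dom k) (fun x y => H (k + mob_re x y) (mob_im x y)) ->
  (forall x y, mob_dom k x y ->
     continuity_2d_pt (fun x y => H (k + mob_re x y) (mob_im x y)) x y) ->
  forall x y, cut_disc k x y -> ER_le (u x y) (H (k + mob_re x y) (mob_im x y)).
Proof.
  intros Hadm Hk Hbe Hbal HH Hharm Hcont.
  pose proof Hadm as [HU [Hsub [Hu1 _]]].
  set (h := fun x y => H (k + mob_re x y) (mob_im x y)).
  assert (Hh0 : forall x y, cut_disc k x y -> 0 <= h x y).
  { intros x y S; destruct (cut_disc_sub_dom k x y ltac:(lra) S) as [_ Ha].
    destruct (cut_disc_abs2_bounds k x y Hk S) as [_ Hq].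
    pose proof (HH _ _ Ha Hq).
    pose proof (Rpower_pos ((k + mob_re x y) ^ 2 + mob_im x y ^ 2) (be/2)).
    unfold h; lra. }
  set (r := Rmin (k/8) (1/32)).
  assert (Hr : 0 < r) by (apply Rmin_pos; lra).
  assert (Hmax := subharmonic_le_of_collar U (cut_disc k) core_half_disc
    (fun x y => ER_addR (u x y) ((x^2 + y^2) / 4)) h r 2 Hsub Hr
    (fun x y S => HU x y (cut_disc_sub_big_disc k x y S))
    (fun px py I x y C =>
       core_disc_sub_cut_disc k r px py x y Hr (Rmin_l _ _) (Rmin_r _ _) I C)
    (harmonic_on_subset _ _ h (fun x y S => cut_disc_sub_dom k x y ltac:(lra) S) Hharm)
    (fun x y S => Hcont x y (cut_disc_sub_dom k x y ltac:(lra) S))).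
  intros x y S.
  enough (Hv : ER_le (ER_addR (u x y) ((x^2 + y^2) / 4)) (h x y - (x^2 + y^2))).
  { apply ER_le_addR in Hv; destruct (u x y); simpl in *; auto.
    pose proof (pow2_ge_0 x); pose proof (pow2_ge_0 y); unfold h in Hv; lra. }
  apply Hmax; auto.
  - intros x' y' S' NI; apply ER_le_addR.
    eapply (admissible_le_on_collar al be k H U u x' y') in Hadm; eauto.
    destruct (u x' y'); simpl in *; auto; unfold h; lra.
  - intros x' y' S'; apply ER_le_addR.
    specialize (Hu1 x' y' (cut_disc_sub_big_disc k x' y' S')); specialize (Hh0 x' y' S').
    destruct (near_origin_of_mob_small x' y' (proj1 S')) as [_ [Hz _]].
    destruct (u x' y'); simpl in *; auto; lra.
Qed.

Lemma admissible_le_barrier_on_neg_axis al be H U u s :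
  admissible al U u -> 0 < s <= 2/7 -> 0 < be <= 2 -> be <= al -> barrier be H ->
  (forall k, harmonic_on (mob_dom k) (fun x y => H (k + mob_re x y) (mob_im x y))) ->
  (forall k x y, mob_dom k x y ->
     continuity_2d_pt (fun x y => H (k + mob_re x y) (mob_im x y)) x y) ->
  ER_le (u (-s) 0) (H (s/4 + 2 * s / (s + 2)) 0).
Proof.
  intros Hadm Hs Hbe Hbal HH Hharm Hcont.
  destruct (neg_axis_cut_disc (s/4) s ltac:(lra) Hs) as [S [Ere Eim]].
  assert (Hle := admissible_le_barrier_on_cut_disc al be (s/4) H U u Hadm
    ltac:(lra) Hbe Hbal HH (Hharm _) (Hcont _) (-s) 0 S).
  rewrite Ere, Eim in Hle; exact Hle.
Qed.

Lemma admissible_bound_lt1 al U u s : 0 < al < 1 -> admissible al U u -> 0 < s <= 1/2 ->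
  ER_le (u (-s) 0) (160 / cos (al * (PI/2)) * Rpower s al).
Proof.
  intros Hal Hadm Hs.
  assert (Hc := cos_pos_frac_half_PI al Hal).
  assert (HC : 160 <= 160 / cos (al * (PI/2))).
  { pose proof (COS_bound (al * (PI/2))).
    apply (Rmult_le_reg_r (cos (al * (PI/2)))); [lra|].
    replace (160 / cos (al * (PI/2)) * cos (al * (PI/2))) with 160 by (field; lra); nra. }
  destruct (Rle_or_lt s (2/7)).
  - assert (Hle := admissible_le_barrier_on_neg_axis al al _ U u s Hadm ltac:(lra)
      ltac:(lra) ltac:(lra) (barrier_re_pow al Hal)
      (fun k => harmonic_on_scal _ _ _ (harmonic_on_re_pow_mob al k))
      (fun k x y D => continuity_2d_pt_mult _ _ x y (continuity_2d_pt_const x y _)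
                        (continuity_2d_pt_re_pow_mob al k x y D))).
    destruct (neg_axis_mob_bounds s ltac:(lra)).
    cbv beta in Hle; rewrite re_pow_real_axis in Hle by lra.
    assert (Hp := Rpower_le_scale (s/4 + 2 * s / (s + 2)) s al
                    ltac:(lra) ltac:(lra) ltac:(lra)).
    assert (0 < 128 / cos (al * (PI/2))) by (apply Rdiv_lt_0_compat; lra).
    replace (160 / cos (al * (PI/2))) with (128 / cos (al * (PI/2)) * (5/4)) by (field; lra).
    destruct (u (-s) 0); simpl in *; auto; nra.
  - assert (s <= Rpower s al) by (apply Rpower_ge_base; lra).
    pose proof (admissible_le_1 al U u s Hadm Hs).
    destruct (u (-s) 0); simpl in *; auto; nra.
Qed.

Lemma admissible_bound_eq1 U u s : admissible 1 U u -> 0 < s <= 1/2 ->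
  ER_le (u (-s) 0) (- 640 * s * ln s).
Proof.
  intros Hadm Hs.
  assert (Hls : 1 - s <= - ln s).
  { pose proof (exp_ineq1_le (ln s)); rewrite exp_ln in * by lra; lra. }
  destruct (Rle_or_lt s (2/7)).
  - assert (Hle := admissible_le_barrier_on_neg_axis 1 1 _ U u s Hadm ltac:(lra)
      ltac:(lra) ltac:(lra) barrier_re_neg_wlogw
      (fun k => harmonic_on_scal _ _ _ (harmonic_on_re_neg_wlogw_mob k))
      (fun k x y D => continuity_2d_pt_mult _ _ x y (continuity_2d_pt_const x y _)
                        (continuity_2d_pt_re_neg_wlogw_mob k x y D))).
    destruct (neg_axis_mob_bounds s ltac:(lra)).
    cbv beta in Hle; rewrite re_neg_wlogw_real_axis in Hle by lra.
    assert (ln s <= ln (s/4 + 2 * s / (s + 2))) by (apply ln_le; lra).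
    destruct (u (-s) 0); simpl in *; auto; nra.
  - pose proof (admissible_le_1 1 U u s Hadm Hs).
    destruct (u (-s) 0); simpl in *; auto; nra.
Qed.

Lemma admissible_bound_gt1 al U u s : 1 < al -> admissible al U u -> 0 < s <= 1/2 ->
  ER_le (u (-s) 0) ((sub_pow_coef (Rmin al (3/2)) + 256) * (5/4) * s).
Proof.
  intros Hal Hadm Hs.
  set (g := Rmin al (3/2)).
  assert (Hg : 1 < g <= 3/2) by (split; [apply Rmin_glb_lt | apply Rmin_r]; lra).
  assert (HB := sub_pow_coef_pos g Hg).
  destruct (Rle_or_lt s (2/7)).
  - assert (Hle := admissible_le_barrier_on_neg_axis al g _ U u s Hadm ltac:(lra)
      ltac:(lra) (Rmin_l _ _) (barrier_sub_pow g Hg)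
      (fun k => harmonic_on_lincomb _ _ _ _ _
                  (harmonic_on_mob_re k) (harmonic_on_re_pow_mob g k))
      (fun k x y D => continuity_2d_pt_plus _ _ x y
         (continuity_2d_pt_mult _ _ x y (continuity_2d_pt_const x y _)
            (proj1 (continuity_2d_pt_mob k x y (proj1 D))))
         (continuity_2d_pt_mult _ _ x y (continuity_2d_pt_const x y _)
            (continuity_2d_pt_re_pow_mob g k x y D)))).
    destruct (neg_axis_mob_bounds s ltac:(lra)).
    cbv beta in Hle; rewrite re_pow_real_axis in Hle by lra.
    pose proof (Rpower_pos (s/4 + 2 * s / (s + 2)) g).
    destruct (u (-s) 0); simpl in *; auto; nra.
  - pose proof (admissible_le_1 al U u s Hadm Hs).
    destruct (u (-s) 0); simpl in *; auto; nra.
Qed.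

Theorem lemma2p9 (alpha : R) (halpha : 0 < alpha) :
  exists c : R, 0 < c /\
  forall (U : R -> R -> Prop) (u : R -> R -> ER),
    (forall x y, cdisc (-1) 0 3 x y -> U x y) ->
    qsh_lap_ge_m1 U u ->
    (forall x y, cdisc (-1) 0 3 x y -> ER_le (u x y) 1) ->
    (forall x y, cdisc 1 0 1 x y -> ER_le (u x y) (rpow (modz x y) alpha)) ->
    ER_le (u 0 0) 0 /\
    forall t : R, -1/2 <= t < 0 ->
      (alpha <> 1 -> ER_le (u t 0) (c * Rpower (Rabs t) (Rmin 1 alpha))) /\
      (alpha = 1 -> ER_le (u t 0) (- c * Rabs t * ln (Rabs t))).
Proof.
  enough (Hs : exists c, 0 < c /\ forall U u, admissible alpha U u ->
    forall s, 0 < s <= 1/2 ->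
      (alpha <> 1 -> ER_le (u (-s) 0) (c * Rpower s (Rmin 1 alpha))) /\
      (alpha = 1 -> ER_le (u (-s) 0) (- c * s * ln s))).
  { destruct Hs as [c [Hc Hs]]; exists c; split; [exact Hc|].
    intros U u HU Hq Hu1 Hual.
    assert (Hadm : admissible alpha U u) by exact (conj HU (conj Hq (conj Hu1 Hual))).
    split; [exact (admissible_origin _ _ _ Hadm)|].
    intros t Ht; rewrite Rabs_left by lra.
    assert (Hb := Hs U u Hadm (- t) ltac:(lra)); rewrite Ropp_involutive in Hb; exact Hb. }
  destruct (Rlt_le_dec alpha 1) as [Hlt | Hge]; [|destruct (Req_dec alpha 1) as [-> | Hne]].
  - exists (160 / cos (alpha * (PI/2))).
    split; [apply Rdiv_lt_0_compat; [lra | apply cos_pos_frac_half_PI; lra]|].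
    intros U u Hadm s Hs; split; [intros _ | intros; lra].
    rewrite Rmin_right by lra; apply (admissible_bound_lt1 alpha U u s); auto.
  - exists 640; split; [lra|].
    intros U u Hadm s Hs; split; [intros; lra | intros _].
    apply (admissible_bound_eq1 U u s); auto.
  - assert (HB := sub_pow_coef_pos (Rmin alpha (3/2))
                    ltac:(split; [apply Rmin_glb_lt | apply Rmin_r]; lra)).
    exists ((sub_pow_coef (Rmin alpha (3/2)) + 256) * (5/4)); split; [lra|].
    intros U u Hadm s Hs; split; [intros _ | intros; lra].
    rewrite (Rmin_left 1 alpha), Rpower_1 by lra.
    apply (admissible_bound_gt1 alpha U u s); auto; lra.
Qed.
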